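(* Let $n,k$ be positive integers and $G=G_{n,k}\le\mathrm{Aut}_{\mathrm{gr}}(\Bbbk_{-1}[u,v])$. Then $G$ contains no quasi-reflections if and only if $k\not\equiv2\pmod4$ and $\gcd(n,k)\le2$.
   Context: $\Bbbk$ is algebraically closed of characteristic $0$; $\Bbbk_{-1}[u,v]=\Bbbk\langle u,v\rangle/(vu+uv)$, with matrices $\begin{pmatrix}a&b\\c&d\end{pmatrix}$ acting by $u\mapsto au+cv$, $v\mapsto bu+dv$. With $\omega$ a primitive $(2nk)$th root of unity, $G_{n,k}$ is generated by $\mathrm{diag}(\omega^{2k},\omega^{-2k})$ and $\begin{pmatrix}0&\omega^n\\\omega^n&0\end{pmatrix}$. For a graded automorphism $g$, $\mathrm{Tr}(g)=\sum_i\mathrm{tr}(g|_{A_i})t^i$, and $g$ is a quasi-reflection if $\mathrm{Tr}(g)=\frac1{(1-t)(1-\lambda t)}$ for some $\lambda\ne1$. *)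

From HB Require Import structures.
From mathcomp Require Import all_boot all_order all_algebra.
Set Implicit Arguments. Unset Strict Implicit. Unset Printing Implicit Defensive.
Import Order.TTheory GRing.Theory Num.Theory.
Local Open Scope ring_scope.

Section SkewPoly.
Variable K : fieldType.

(* A homogeneous element of degree m of k_{-1}[u,v] is represented by its
   coefficient function x : nat -> K, where x i is the coefficient of the
   monomial u^i v^(m-i) (0 <= i <= m).  The degree m is carried separately. *)

(* Product of a degree-m element with a degree-p element, using
   u^i v^(m-i) * u^j v^(p-j) = (-1)^((m-i) j) u^(i+j) v^(m+p-i-j)
   (a consequence of vu = -uv). *)
Definition hmul (m p : nat) (x y : nat -> K) : nat -> K :=
  fun s => \sum_(i < m.+1) \sum_(j < p.+1)
             (if (i + j == s)%N then (-1) ^+ ((m - i) * j) * x i * y j else 0).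

Definition hone : nat -> K := fun s => if s == 0%N then 1 else 0.

(* Matrix (a b; c d) acts by u |-> a u + c v, v |-> b u + d v. *)
Definition img_u (g : 'M[K]_2) : nat -> K :=
  fun s => if s == 1%N then g 0 0 else if s == 0%N then g 1 0 else 0.
Definition img_v (g : 'M[K]_2) : nat -> K :=
  fun s => if s == 1%N then g 0 1 else if s == 0%N then g 1 1 else 0.

Fixpoint hpow1 (x : nat -> K) (i : nat) : nat -> K :=
  match i with
  | 0%N => hone
  | i'.+1 => hmul 1 i' x (hpow1 x i')
  end.

Definition mono_img (g : 'M[K]_2) (i j : nat) : nat -> K :=
  hmul i j (hpow1 (img_u g) i) (hpow1 (img_v g) j).

Definition trace_deg (g : 'M[K]_2) (m : nat) : K :=
  \sum_(i < m.+1) mono_img g i (m - i) i.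

(* quasi-reflection: Tr(g) = 1/((1-t)(1-lambda t)) for some lambda != 1,
   written coefficientwise: the coefficient of t^m on the right is
   sum_{i=0}^m lambda^i. *)
Definition quasi_reflection (g : 'M[K]_2) : Prop :=
  exists lam : K, lam != 1 /\
    forall m : nat, trace_deg g m = \sum_(i < m.+1) lam ^+ i.

Inductive gen_by (S : 'M[K]_2 -> Prop) : 'M[K]_2 -> Prop :=
| gen_one : gen_by S 1%:M
| gen_in g : S g -> gen_by S g
| gen_mul g h : gen_by S g -> gen_by S h -> gen_by S (g *m h)
| gen_inv g : gen_by S g -> gen_by S (invmx g).

Definition gen_diag (n k : nat) (w : K) : 'M[K]_2 :=
  \matrix_(i < 2, j < 2)
    (if i == j then (if (val i == 0)%N then w ^+ (2 * k) else w ^- (2 * k)) else 0).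

Definition gen_anti (n k : nat) (w : K) : 'M[K]_2 :=
  \matrix_(i < 2, j < 2) (if i == j then 0 else w ^+ n).

Definition G_nk (n k : nat) (w : K) : 'M[K]_2 -> Prop :=
  gen_by (fun g => g = gen_diag n k w \/ g = gen_anti n k w).

End SkewPoly.

From mathcomp Require Import all_boot all_order all_algebra.
From mathcomp Require Import ring zify.
From Stdlib Require Import FunctionalExtensionality.
Import GRing.Theory.

Set Implicit Arguments. Unset Strict Implicit. Unset Printing Implicit Defensive.
Local Open Scope ring_scope.

(* Put e(a, c) = 2k a + 2n c, rho(a, c) = diag(w^e(a,c), w^e(-a,c)) and
   A0 = (0 w^n; w^n 0).  The generators of G_{n,k} are rho(1, 0) and A0, and
   rho is a homomorphism Z^2 -> GL_2 with A0^2 = rho(0, 1) and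
   A0 rho(a, c) = rho(-a, c) A0, so that
        G_{n,k} = { rho(a, c), rho(a, c) A0 : a, c in Z }.
   Computing traces on the monomial bases u^i v^(m-i) of the graded pieces,
   a quasi-reflection diag(x, y) has exactly one of x, y equal to 1 (and
   diag(1, y) with y <> 1 is one), while a quasi-reflection (0 b; c 0) has
   c b = -1 (and (0 z; z 0) with z^2 = -1 is one).  As w is a primitive 2nk-th root of unity, these become
   divisibility conditions on exponents:
   - rho(a, c) is a quasi-reflection iff exactly one of e(a, c), e(-a, c) is
     divisible by 2nk; this never happens when gcd(n, k) <= 2, and happens
     for (a, c) = (n/g, -k/g) when g = gcd(n, k) > 2;
   - rho(a, c) A0 can only be a quasi-reflection if w^(2n(2c+1)) = -1, which
     forces k = 2 (mod 4); conversely it is one for a = 0 when k = 4c + 2.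
   The file develops the trace computations, then the description of
   G_{n,k}, then the arithmetic, and combines them in the section Criterion. *)

Section DiagonalAntidiagonal.
Variable K : fieldType.

Definition mono (s : nat) (a : K) : nat -> K := fun t => if t == s then a else 0.

Lemma sum_delta (m s : nat) (c : K) : (s <= m)%N ->
  \sum_(i < m.+1) (if (i : nat) == s then c else 0) = c.
Proof. by move=> le_sm; rewrite -big_mkcond big_ord1_eq ltnS le_sm. Qed.

Lemma hmul_mono m p s r a b : (s <= m)%N -> (r <= p)%N ->
  hmul m p (mono s a) (mono r b) = mono (s + r) ((-1) ^+ ((m - s) * r) * a * b).
Proof.
move=> le_sm le_rp; apply: functional_extensionality => t; rewrite /hmul.
rewrite (eq_bigr (fun i : 'I_m.+1 => if (i : nat) == s then
   \sum_(j < p.+1) (if (s + j == t)%N then (-1) ^+ ((m - s) * j) * a * mono r b j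
                    else 0) else 0)); last first.
  move=> i _; rewrite /mono; case: (eqVneq (i : nat) s) => [-> //|_].
  by apply: big1 => j _; case: ifP; rewrite ?mulr0 ?mul0r.
rewrite sum_delta //.
rewrite (eq_bigr (fun j : 'I_p.+1 => if (j : nat) == r then
   (if (s + r == t)%N then (-1) ^+ ((m - s) * r) * a * b else 0) else 0)); last first.
  by move=> j _; rewrite /mono; case: (eqVneq (j : nat) r) => [-> //|_]; case: ifP; rewrite ?mulr0.
by rewrite sum_delta // /mono eq_sym.
Qed.

Lemma hpow1_mono_u a i : hpow1 (mono 1 a) i = mono i (a ^+ i).
Proof.
elim: i => [|i IH] /=; first by rewrite expr0.
by rewrite IH hmul_mono // subnn mul0n expr0 mul1r exprS.
Qed.

Lemma hpow1_mono_v a i : hpow1 (mono 0 a) i = mono 0 (a ^+ i).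
Proof.
elim: i => [|i IH] /=; first by rewrite expr0.
by rewrite IH hmul_mono // muln0 expr0 mul1r exprS.
Qed.

Definition Dg (x y : K) : 'M[K]_2 :=
  \matrix_(i < 2, j < 2) (if i == j then (if (val i == 0)%N then x else y) else 0).
Definition Ag (b c : K) : 'M[K]_2 :=
  \matrix_(i < 2, j < 2) (if i == j then 0 else (if (val i == 0)%N then b else c)).

Lemma trace_Dg x y m :
  trace_deg (Dg x y) m = \sum_(i < m.+1) x ^+ i * y ^+ (m - i).
Proof.
have img_u : img_u (Dg x y) = mono 1 x.
  by apply: functional_extensionality => -[|[|s]]; rewrite /img_u /mono !mxE.
have img_v : img_v (Dg x y) = mono 0 y.
  by apply: functional_extensionality => -[|[|s]]; rewrite /img_v /mono !mxE.
rewrite /trace_deg; apply: eq_bigr => i _.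
rewrite /mono_img img_u img_v hpow1_mono_u hpow1_mono_v hmul_mono //.
by rewrite /mono addn0 eqxx subnn mul0n expr0 mul1r.
Qed.

(* (0 b; c 0) maps u^i v^(m-i) to a multiple of u^(m-i) v^i, so only the
   middle monomial u^i v^i (m = 2i) contributes to the trace. *)
Lemma trace_Ag b c m : trace_deg (Ag b c) m =
  \sum_(i < m.+1) (if (i : nat) == (m - i)%N
                   then (-1) ^+ (i * (m - i)) * c ^+ i * b ^+ (m - i) else 0).
Proof.
have img_u : img_u (Ag b c) = mono 0 c.
  by apply: functional_extensionality => -[|[|s]]; rewrite /img_u /mono !mxE.
have img_v : img_v (Ag b c) = mono 1 b.
  by apply: functional_extensionality => -[|[|s]]; rewrite /img_v /mono !mxE.
rewrite /trace_deg; apply: eq_bigr => i _.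
by rewrite /mono_img img_u img_v hpow1_mono_u hpow1_mono_v hmul_mono // /mono add0n subn0.
Qed.

(* Quasi-reflections among diagonal matrices: the coefficients of t and t^2
   in Tr(diag(x,y)) = 1/((1-t)(1-l t)) force x + y = 1 + l and x y = l,
   i.e. {x, y} = {1, l} with l != 1. *)
Lemma qr_Dg x y : quasi_reflection (Dg x y) -> (x == 1) != (y == 1).
Proof.
case=> l [l_neq1 trE].
have := trE 1%N; have := trE 2%N.
rewrite !trace_Dg !big_ord_recr !big_ord0 /= !expr0 !expr1 !add0r subn0.
rewrite !mul1r !mulr1 => tr2 tr1.
have xy_l : x * y = l.
  have -> : x * y = (y + x) ^+ 2 - (y ^+ 2 + x * y + x ^+ 2) by ring.
  by rewrite tr1 tr2; ring.
have : (x - 1) * (y - 1) = 0.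
  have -> : (x - 1) * (y - 1) = x * y - (y + x) + 1 by ring.
  by rewrite xy_l tr1; ring.
move/eqP; rewrite mulf_eq0 !subr_eq0 => /orP[/eqP x1 | /eqP y1].
  by move: xy_l l_neq1; rewrite x1 eqxx mul1r => ->.
by move: xy_l l_neq1; rewrite y1 eqxx mulr1 => -> /negPf ->.
Qed.

Lemma qr_Dg_witness y : y != 1 -> quasi_reflection (Dg 1 y).
Proof.
move=> y_neq1; exists y; split => // m.
rewrite trace_Dg.
under eq_bigr do rewrite expr1n mul1r.
rewrite -(big_mkord xpredT (fun i => y ^+ (m - i))) big_rev_mkord subn0.
by apply: eq_bigr => i _; rewrite subSS subKn // -ltnS.
Qed.

(* Quasi-reflections among antidiagonal matrices: the coefficients of t and
   t^2 give 0 = 1 + l and -c b = 1 + l + l^2, whence c b = -1. *)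
Lemma qr_Ag b c : quasi_reflection (Ag b c) -> c * b = -1.
Proof.
case=> l [_ trE].
have := trE 1%N; have := trE 2%N.
rewrite !trace_Ag !big_ord_recr !big_ord0 /= !add0r !addr0 expr0 !expr1.
move=> tr2 /esym/eqP; rewrite addrC addr_eq0 => /eqP l_m1.
move: tr2; rewrite l_m1 sqrrN expr1n mulN1r subrr add0r.
by move/eqP; rewrite mulNr eqr_oppLR => /eqP.
Qed.

Lemma sum_sign m : \sum_(i < m.+1) (-1 : K) ^+ i = (~~ odd m)%:R.
Proof.
elim: m => [|m IH]; first by rewrite big_ord1 expr0.
rewrite big_ord_recr /= IH -signr_odd /=.
by case: (odd m); rewrite /= ?expr0 ?expr1 ?add0r ?addrN.
Qed.

(* If z^2 = -1 and the characteristic is not 2, then (0 z; z 0) has trace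
   series 1/(1-t^2) = 1/((1-t)(1+t)), so it is a quasi-reflection. *)
Lemma qr_Ag_witness z : z ^+ 2 = -1 -> (-1 != 1 :> K) -> quasi_reflection (Ag z z).
Proof.
move=> z2 m1_neq1; exists (-1); split => // m.
rewrite trace_Ag sum_sign.
case: (boolP (odd m)) => [m_odd | m_even].
  apply: big1 => i _; case: eqP => // i_half; exfalso.
  have m2i : m = (i + i)%N by have := ltn_ord i; lia.
  by move: m_odd; rewrite m2i addnn odd_double.
set l := m./2; have m2l : m = (l + l)%N.
  by rewrite addnn -{1}(odd_double_half m) (negPf m_even).
rewrite (eq_bigr (fun i : 'I_m.+1 => if (i : nat) == l
                   then (-1) ^+ (l * l) * z ^+ m else 0)); last first.
  move=> i _; case: (eqVneq (i : nat) l) => [-> | i_neq].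
    by rewrite (_ : (m - l = l)%N) ?eqxx -?mulrA -?exprD -?m2l //; lia.
  by case: eqP => // i_half; case/eqP: i_neq; lia.
rewrite sum_delta; last by lia.
rewrite m2l addnn -mul2n (exprM z) z2 -exprD -signr_odd oddD oddM.
by case: (odd l).
Qed.

Ltac mx2_ext := apply/matrixP => -[[|[|//]] ?] [[|[|//]] ?];
  rewrite !mxE !big_ord_recr big_ord0 /= !mxE /= ?(mulr0, mul0r, add0r, addr0).

Lemma mulmx_DD x1 y1 x2 y2 : Dg x1 y1 *m Dg x2 y2 = Dg (x1 * x2) (y1 * y2).
Proof. by mx2_ext. Qed.
Lemma mulmx_DA x y b c : Dg x y *m Ag b c = Ag (x * b) (y * c).
Proof. by mx2_ext. Qed.
Lemma mulmx_AD b c x y : Ag b c *m Dg x y = Ag (b * y) (c * x).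
Proof. by mx2_ext. Qed.
Lemma mulmx_AA b1 c1 b2 c2 : Ag b1 c1 *m Ag b2 c2 = Dg (b1 * c2) (c1 * b2).
Proof. by mx2_ext. Qed.
Lemma Dg11 : Dg 1 1 = 1%:M.
Proof. by apply/matrixP => -[[|[|//]] ?] [[|[|//]] ?]; rewrite !mxE. Qed.

Lemma invmx_eq (g g' : 'M[K]_2) : g *m g' = 1%:M -> invmx g = g'.
Proof.
move=> gg'1; have [g_unit _] := mulmx1_unit gg'1.
by rewrite -[invmx g]mulmx1 -gg'1 mulmxA mulVmx // mul1mx.
Qed.

End DiagonalAntidiagonal.

Lemma gen_by_zpow (K : fieldType) (S : 'M[K]_2 -> Prop) (M : int -> 'M[K]_2) :
  M 0 = 1%:M -> (forall x y, M (x + y) = M x *m M y) -> gen_by S (M 1) ->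
  forall z, gen_by S (M z).
Proof.
move=> M0 MD S_M1.
have M_nat m : gen_by S (M m%:Z).
  elim: m => [|m IH]; first by rewrite M0; apply: gen_one.
  by rewrite -addn1 PoszD MD; apply: gen_mul.
case=> m; first exact: M_nat.
have -> : M (Negz m) = invmx (M m.+1%:Z).
  by apply/esym/invmx_eq; rewrite -MD NegzE addrN.
exact/gen_inv/M_nat.
Qed.

Definition expo (n k : nat) (a c : int) : int := 2 * k%:Z * a + 2 * n%:Z * c.

Section GroupGnk.
Variables (K : fieldType) (n k : nat) (w : K).
Hypothesis w_neq0 : w != 0.

Definition rho (a c : int) : 'M[K]_2 := Dg (w ^ expo n k a c) (w ^ expo n k (- a) c).

Lemma gen_diag_rho : gen_diag n k w = rho 1 0.
Proof. by rewrite /rho /expo mulr1 mulrN1 !mulr0 !addr0 -PoszM -exprnN. Qed.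

Lemma gen_anti_Ag : gen_anti n k w = Ag (w ^+ n) (w ^+ n).
Proof. by apply/matrixP => -[[|[|//]] ?] [[|[|//]] ?]; rewrite !mxE. Qed.

Lemma rhoD a1 c1 a2 c2 : rho a1 c1 *m rho a2 c2 = rho (a1 + a2) (c1 + c2).
Proof.
rewrite mulmx_DD /rho -!expfzDr //; congr (Dg (w ^ _) (w ^ _)); rewrite /expo; ring.
Qed.

Lemma rho00 : rho 0 0 = 1%:M.
Proof. by rewrite /rho /expo oppr0 !mulr0 addr0 expr0z Dg11. Qed.

Lemma rho_inv a c : invmx (rho a c) = rho (- a) (- c).
Proof. by apply: invmx_eq; rewrite rhoD !addrN rho00. Qed.

Lemma anti_rho a c : gen_anti n k w *m rho a c = rho (- a) c *m gen_anti n k w.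
Proof. by rewrite gen_anti_Ag mulmx_AD mulmx_DA opprK !(mulrC (w ^+ n)). Qed.

Lemma anti_sq : gen_anti n k w *m gen_anti n k w = rho 0 1.
Proof.
rewrite gen_anti_Ag mulmx_AA /rho /expo oppr0 !mulr0 !add0r mulr1.
by rewrite -exprD addnn -mul2n.
Qed.

Lemma rho_anti a c : rho a c *m gen_anti n k w =
  Ag (w ^ (expo n k a c + n%:Z)) (w ^ (expo n k (- a) c + n%:Z)).
Proof. by rewrite gen_anti_Ag mulmx_DA !expfzDr. Qed.

Lemma Gnk_elements g : G_nk n k w g ->
  exists a c, g = rho a c \/ g = rho a c *m gen_anti n k w.
Proof.
elim=> {g} [| g [->|->] | g1 g2 _ [a1 [c1 g1E]] _ [a2 [c2 g2E]] | g _ [a [c gE]]].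
- by exists 0, 0; left; rewrite rho00.
- by exists 1, 0; left; rewrite gen_diag_rho.
- by exists 0, 0; right; rewrite rho00 mul1mx.
- case: g1E g2E => -> [] ->.
  + by exists (a1 + a2), (c1 + c2); left; rewrite rhoD.
  + by exists (a1 + a2), (c1 + c2); right; rewrite mulmxA rhoD.
  + by exists (a1 - a2), (c1 + c2); right; rewrite -mulmxA anti_rho mulmxA rhoD.
  + exists (a1 - a2), (c1 + c2 + 1); left.
    rewrite !mulmxA -(mulmxA _ _ (rho a2 c2)) anti_rho mulmxA rhoD -mulmxA.
    by rewrite anti_sq rhoD addr0.
- case: gE => ->.
    by exists (- a), (- c); left; rewrite rho_inv.
  exists a, (- c - 1); right; apply: invmx_eq.
  rewrite !mulmxA -(mulmxA _ _ (rho a _)) anti_rho mulmxA rhoD -mulmxA.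
  by rewrite anti_sq rhoD -rho00; congr rho; ring.
Qed.

Lemma rho_in_Gnk a c : G_nk n k w (rho a c).
Proof.
have -> : rho a c = rho a 0 *m rho 0 c by rewrite rhoD addr0 add0r.
apply: gen_mul.
- apply: (gen_by_zpow (M := fun a => rho a 0)) => [|x y|]; first exact: rho00.
    by rewrite rhoD addr0.
  by rewrite -gen_diag_rho; apply: gen_in; left.
- apply: (gen_by_zpow (M := rho 0)) => [|x y|]; first exact: rho00.
    by rewrite rhoD addr0.
  by rewrite -anti_sq; apply: gen_mul; apply: gen_in; right.
Qed.

Lemma rho_anti_in_Gnk a c : G_nk n k w (rho a c *m gen_anti n k w).
Proof. by apply: gen_mul; [apply: rho_in_Gnk | apply: gen_in; right]. Qed.

End GroupGnk.

Lemma prim_exprz_eq1 (R : unitRingType) (N : nat) (w : R) :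
  N.-primitive_root w -> forall z : int, (w ^ z == 1) = (N%:Z %| z)%Z.
Proof. by move=> prim_w [] m; rewrite dvdzE /= ?invr_eq1 (prim_order_dvd prim_w). Qed.

Lemma dvdn_gcd_le2 n k m : (0 < k)%N -> (gcdn n k <= 2)%N ->
  (k %| n * m)%N -> (k %| 2 * m)%N.
Proof.
move=> k_gt0 gcd_le2 k_nm.
have gcd_dvd2 : (gcdn n k %| 2)%N.
  by move: gcd_le2 (gcdn_gt0 n k); rewrite k_gt0 orbT; case: (gcdn n k) => [|[|[|]]].
apply: dvdn_trans (dvdn_mul gcd_dvd2 (dvdnn m)).
by rewrite muln_gcdl dvdn_gcd k_nm dvdn_mulr.
Qed.

Lemma mod4_eq2 k m : (k %| 2 * m)%N -> ~~ (k %| m)%N -> ~~ (2 %| m)%N -> (k %% 4 = 2)%N.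
Proof.
move=> k_2m k_ndvd_m two_ndvd_m.
have k_even : ~~ odd k.
  apply/negP => k_odd; case/negP: k_ndvd_m.
  by move: k_2m; rewrite Gauss_dvdr // coprimen2 k_odd.
have k2j : k = (2 * k./2)%N by rewrite -{1}(odd_double_half k) (negPf k_even) mul2n.
have j_odd : odd k./2.
  case: (boolP (odd k./2)) => // j_even; case/negP: two_ndvd_m.
  apply: dvdn_trans (_ : k./2 %| m)%N; first by rewrite dvdn2.
  by move: k_2m; rewrite {1}k2j dvdn_pmul2l.
by rewrite k2j -(odd_double_half k./2) j_odd; lia.
Qed.

(* If gcd(n, k) <= 2 then 2nk | e(a, c) implies 2nk | e(-a, c): writing
   e(-a, c) = 4nc - e(a, c), it suffices that k | 2c, which follows from
   k | e(a, c)/2 = k a + n c. *)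
Lemma expo_diag n k a c : (0 < n)%N -> (0 < k)%N -> (gcdn n k <= 2)%N ->
  ((2 * n * k)%N%:Z %| expo n k a c)%Z -> ((2 * n * k)%N%:Z %| expo n k (- a) c)%Z.
Proof.
move=> n_gt0 k_gt0 gcd_le2; rewrite /expo.
have -> : (2 * n * k)%N%:Z = 2 * (n%:Z * k%:Z) by lia.
have -> : 2 * k%:Z * a + 2 * n%:Z * c = 2 * (k%:Z * a + n%:Z * c) by ring.
rewrite dvdz_mul2l // => nk_dvd.
have k_nc : (k%:Z %| n%:Z * c)%Z.
  have : (k%:Z %| k%:Z * a + n%:Z * c)%Z by apply: dvdz_trans nk_dvd; apply: dvdz_mull.
  by rewrite rpredDl // dvdz_mulr.
have k_2c : (k%:Z %| 2 * c)%Z.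
  by move: k_nc; rewrite !dvdzE !abszM /=; apply: dvdn_gcd_le2.
have -> : 2 * k%:Z * - a + 2 * n%:Z * c = (2 * n%:Z) * (2 * c) - 2 * (k%:Z * a + n%:Z * c).
  by ring.
rewrite rpredB //; last by rewrite dvdz_mul2l.
by rewrite -mulrA !dvdz_mul2l // -lt0n.
Qed.

Lemma expo_anti n k c : (0 < n)%N ->
  ((2 * n * k)%N%:Z %| 2 * (2 * n%:Z * (2 * c + 1)))%Z ->
  ~~ ((2 * n * k)%N%:Z %| 2 * n%:Z * (2 * c + 1))%Z -> (k %% 4 = 2)%N.
Proof.
move=> n_gt0; have -> : (2 * n * k)%N%:Z = 2 * n%:Z * k%:Z by lia.
have -> : 2 * (2 * n%:Z * (2 * c + 1)) = 2 * n%:Z * (2 * (2 * c + 1)) by ring.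
have n2_neq0 : 2 * n%:Z != 0 by rewrite mulf_neq0 // -lt0n.
rewrite !dvdz_mul2l // => k_dvd k_ndvd; apply: (@mod4_eq2 k (absz (2 * c + 1))).
- by move: k_dvd; rewrite dvdzE abszM.
- exact: k_ndvd.
- by rewrite -[2%N]/`|2|%N -dvdzE rpredDl ?dvdz_mulr.
Qed.

(* For n = n1 g and k = k1 g with g > 2: e(n1, -k1) = 0 whereas
   e(-n1, -k1) = -4 n1 k1 g is not divisible by 2nk = 2 n1 k1 g^2. *)
Lemma expo_witness n1 k1 g : (0 < n1)%N -> (0 < k1)%N -> (2 < g)%N ->
  expo (n1 * g) (k1 * g) n1%:Z (- k1%:Z) = 0 /\
  ~~ ((2 * (n1 * g) * (k1 * g))%N%:Z %| expo (n1 * g) (k1 * g) (- n1%:Z) (- k1%:Z))%Z.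
Proof.
move=> n1_gt0 k1_gt0 g_gt2; split; first by rewrite /expo !PoszM; ring.
have -> : expo (n1 * g) (k1 * g) (- n1%:Z) (- k1%:Z) = - (2 * n1 * k1 * g * 2)%N%:Z.
  by rewrite /expo !PoszM; ring.
rewrite rpredN dvdzE /= (_ : (2 * (n1 * g) * (k1 * g) = 2 * n1 * k1 * g * g)%N); last by ring.
rewrite dvdn_pmul2l ?muln_gt0 ?n1_gt0 ?k1_gt0 ?(ltn_trans _ g_gt2) //.
by apply/negP => /dvdn_leq; lia.
Qed.

Lemma prim_root_half (R : idomainType) m (w : R) :
  (2 * m).-primitive_root w -> w ^+ m = -1.
Proof.
move=> prim_w; have := prim_expr_order prim_w.
rewrite mulnC exprM => /eqP; rewrite sqrf_eq1 => /orP[/eqP wm1 | /eqP //].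
have := prim_order_gt0 prim_w; rewrite muln_gt0 /= => m_gt0.
have := prim_order_dvd prim_w m; rewrite wm1 eqxx => /dvdn_leq; lia.
Qed.

Section Criterion.
Variables (K : fieldType) (n k : nat) (w : K).
Hypotheses (n_gt0 : (0 < n)%N) (k_gt0 : (0 < k)%N).
Hypothesis prim_w : (2 * n * k)%N.-primitive_root w.
Hypothesis m1_neq1 : (-1 : K) != 1.

Let w_neq0 : w != 0.
Proof. by rewrite (prim_root_eq0 prim_w) -lt0n !muln_gt0 n_gt0 k_gt0. Qed.

Let w_eq1 : forall z : int, (w ^ z == 1) = ((2 * n * k)%N%:Z %| z)%Z.
Proof. exact: prim_exprz_eq1. Qed.

(* If k = 4q + 2 then z = w^(n(2q+1)) is a square root of w^(nk) = -1, and
   rho 0 q A0 = (0 z; z 0) is a quasi-reflection in G_{n,k}. *)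
Lemma Gnk_qr_of_mod4 : (k %% 4 = 2)%N ->
  exists g, G_nk n k w g /\ quasi_reflection g.
Proof.
move=> k_mod4; exists (rho n k w 0 (k %/ 4)%N%:Z *m gen_anti n k w).
split; first exact: rho_anti_in_Gnk.
rewrite rho_anti // oppr0; apply: qr_Ag_witness => //.
have k_eq : k = (4 * (k %/ 4) + 2)%N by lia.
set q := (k %/ 4)%N in k_eq *.
change ((w ^ (expo n k 0 q + n%:Z)) ^ 2%:Z = -1).
rewrite exprz_exp (_ : _ * 2%:Z = (n * k)%N%:Z); last by rewrite /expo k_eq; nia.
by apply: prim_root_half; rewrite mulnA.
Qed.

(* If g = gcd(n, k) > 2 then rho (n/g) (-k/g) = diag(1, w^(-4nk/g)) is a
   quasi-reflection in G_{n,k}. *)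
Lemma Gnk_qr_of_gcd : (2 < gcdn n k)%N ->
  exists g, G_nk n k w g /\ quasi_reflection g.
Proof.
move=> gcd_gt2; set d := gcdn n k.
have d_gt0 : (0 < d)%N by rewrite gcdn_gt0 n_gt0.
have n1_gt0 : (0 < n %/ d)%N by rewrite divn_gt0 // dvdn_leq // dvdn_gcdl.
have k1_gt0 : (0 < k %/ d)%N by rewrite divn_gt0 // dvdn_leq // dvdn_gcdr.
have [] := expo_witness n1_gt0 k1_gt0 gcd_gt2.
rewrite !divnK ?dvdn_gcdl ?dvdn_gcdr // => x_eq0 y_ndvd.
exists (rho n k w (n %/ d)%N%:Z (- (k %/ d)%N%:Z)); split; first exact: rho_in_Gnk.
by rewrite /rho x_eq0 expr0z; apply: qr_Dg_witness; rewrite w_eq1.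
Qed.

(* When gcd(n, k) <= 2 the two eigenvalues of rho a c are simultaneously
   equal to 1 or not, so rho a c is never a quasi-reflection. *)
Lemma Gnk_diag_not_qr a c : (gcdn n k <= 2)%N -> ~ quasi_reflection (rho n k w a c).
Proof.
move=> gcd_le2 /qr_Dg; rewrite !w_eq1 => /negP; apply; apply/eqP; apply/idP/idP.
  exact: expo_diag n_gt0 k_gt0 gcd_le2.
by move=> /(expo_diag n_gt0 k_gt0 gcd_le2); rewrite opprK.
Qed.

(* rho a c A0 = (0 b; c' 0) with c' b = w^(2n(2c+1)); this equals -1 only
   if k = 2 (mod 4). *)
Lemma Gnk_anti_not_qr a c : (k %% 4 != 2)%N ->
  ~ quasi_reflection (rho n k w a c *m gen_anti n k w).
Proof.
move=> k_mod4; rewrite rho_anti // => /qr_Ag; rewrite -expfzDr //.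
have -> : expo n k (- a) c + n%:Z + (expo n k a c + n%:Z) = 2 * n%:Z * (2 * c + 1).
  by rewrite /expo; ring.
move=> wz; move/eqP: k_mod4; apply; apply: (@expo_anti n k c n_gt0).
  by rewrite -w_eq1 mulrC -exprz_exp wz -[_ ^ 2]/(_ ^+ 2) sqrrN expr1n.
by rewrite -w_eq1 wz.
Qed.

End Criterion.

Lemma char0_oppr1_neq1 (K : fieldType) : [pchar K] =i pred0 -> (-1 : K) != 1.
Proof.
move=> charK0; apply/negP => /eqP m1_eq1.
have : (2%:R : K) == 0 by rewrite mulr2n -{2}m1_eq1 subrr.
by rewrite ((pcharf0P K).1 charK0 2).
Qed.

Theorem mainTheorem5 (K : closedFieldType) (charK0 : [pchar K] =i pred0)
  (n k : nat) (hn : (0 < n)%N) (hk : (0 < k)%N)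
  (w : K) (hw : (2 * n * k)%N.-primitive_root w) :
  (forall g : 'M[K]_2, G_nk n k w g -> ~ quasi_reflection g) <->
  (k %% 4 != 2)%N /\ (gcdn n k <= 2)%N.
Proof.
have m1_neq1 := char0_oppr1_neq1 charK0.
have w_neq0 : w != 0 by rewrite (prim_root_eq0 hw) -lt0n !muln_gt0 hn hk.
split=> [noQR | [k_mod4 gcd_le2] g /(Gnk_elements w_neq0) [a [c [->|->]]]].
- have noQR' P : (P -> exists g, G_nk n k w g /\ quasi_reflection g) -> ~ P.
    by move=> mkQR /mkQR [g [Gg QRg]]; apply: noQR Gg QRg.
  split; first by apply/negP => /eqP; apply/noQR'/Gnk_qr_of_mod4.
  by rewrite leqNgt; apply/negP; apply/noQR'/Gnk_qr_of_gcd.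
- exact: Gnk_diag_not_qr.
- exact: Gnk_anti_not_qr.
Qed.
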